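(* Let $(X,\tau)$ be a $\mathbb{B}$-topological space and $\theta\in\mathbb{B}^X$. Then $\theta$ is compact in $(X,\tau)$ if and only if $\theta[tt]$ is a compact subset of the topological space $(X,\tau[tt])$ and $\theta[ff]$ is a compact subset of the topological space $(X,\tau[ff])$.
   Context: $\mathbb{B}=\{0,1,tt,ff\}$ is the four-element Boolean algebra with bottom $0$, top $1$, and $tt,ff$ incomparable and complements of each other; $a\to b=\neg a\vee b$. $\mathbb{B}^X$ is the set of maps $X\to\mathbb{B}$ with pointwise order and operations; for $\lambda\in\mathbb{B}^X$ and $b\in\mathbb{B}$, $\lambda[b]=\{x\in X:\lambda(x)\ge b\}$. A $\mathbb{B}$-topology on $X$ is a subset $\tau\subseteq\mathbb{B}^X$ containing all constant maps and closed under arbitrary pointwise joins and finite pointwise meets; $\tau[tt]=\{\lambda[tt]:\lambda\in\tau\}$ and $\tau[ff]=\{\lambda[ff]:\lambda\in\tau\}$ are topologies on $X$. $\mathrm{sub}_X(\lambda,\mu)=\bigwedge_{x\in X}(\lambda(x)\to\mu(x))$. $\theta\in\mathbb{B}^X$ is compact if for every pointwise-directed family $\Lambda\subseteq\tau$, $\mathrm{sub}_X(\theta,\bigvee\Lambda)=\bigvee_{\lambda\in\Lambda}\mathrm{sub}_X(\theta,\lambda)$. *)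

From Stdlib Require Import List Classical ClassicalEpsilon.

Inductive B4 : Type := B0 | B1 | Btt | Bff.

Definition ble (a b : B4) : bool :=
  match a, b with
  | B0, _ => true
  | _, B1 => true
  | Btt, Btt => true
  | Bff, Bff => true
  | _, _ => false
  end.

Definition bjoin (a b : B4) : B4 :=
  match a, b with
  | B0, c | c, B0 => c
  | B1, _ | _, B1 => B1
  | Btt, Btt => Btt
  | Bff, Bff => Bff
  | _, _ => B1
  end.

Definition bmeet (a b : B4) : B4 :=
  match a, b with
  | B1, c | c, B1 => c
  | B0, _ | _, B0 => B0
  | Btt, Btt => Btt
  | Bff, Bff => Bff
  | _, _ => B0
  end.

Definition bneg (a : B4) : B4 :=
  match a with B0 => B1 | B1 => B0 | Btt => Bff | Bff => Btt end.

Definition bimpl (a b : B4) : B4 := bjoin (bneg a) b.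

(* the element with given tt- and ff- "coordinates" (B ~ 2 x 2) *)
Definition bmk (t f : bool) : B4 :=
  match t, f with
  | true, true => B1 | true, false => Btt | false, true => Bff | false, false => B0
  end.

Definition pdec (P : Prop) : bool :=
  if excluded_middle_informative P then true else false.

Definition bsup (S : B4 -> Prop) : B4 :=
  bmk (pdec (exists b, S b /\ ble Btt b = true))
      (pdec (exists b, S b /\ ble Bff b = true)).

Definition binf (S : B4 -> Prop) : B4 :=
  bmk (pdec (forall b, S b -> ble Btt b = true))
      (pdec (forall b, S b -> ble Bff b = true)).

Definition pjoin {X : Type} (L : (X -> B4) -> Prop) : X -> B4 :=
  fun x => bsup (fun b => exists l, L l /\ l x = b).

Definition is_Btopology {X : Type} (tau : (X -> B4) -> Prop) : Prop :=
  (forall c : B4, tau (fun _ => c)) /\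
  (forall L : (X -> B4) -> Prop, (forall l, L l -> tau l) -> tau (pjoin L)) /\
  (forall l m, tau l -> tau m -> tau (fun x => bmeet (l x) (m x))).

(* lambda[b] = {x | lambda x >= b} *)
Definition cut {X : Type} (l : X -> B4) (b : B4) : X -> Prop :=
  fun x => ble b (l x) = true.

(* tau[b] = {lambda[b] | lambda in tau} *)
Definition cut_top {X : Type} (tau : (X -> B4) -> Prop) (b : B4) : (X -> Prop) -> Prop :=
  fun U => exists l, tau l /\ U = cut l b.

Definition subX {X : Type} (l m : X -> B4) : B4 :=
  binf (fun b => exists x, b = bimpl (l x) (m x)).

Definition pdirected {X : Type} (L : (X -> B4) -> Prop) : Prop :=
  (exists l, L l) /\
  (forall l m, L l -> L m ->
     exists n, L n /\ forall x, ble (l x) (n x) = true /\ ble (m x) (n x) = true).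

Definition Bcompact {X : Type} (tau : (X -> B4) -> Prop) (theta : X -> B4) : Prop :=
  forall L : (X -> B4) -> Prop, (forall l, L l -> tau l) -> pdirected L ->
    subX theta (pjoin L) = bsup (fun b => exists l, L l /\ b = subX theta l).

Definition compact_subset {X : Type} (T : (X -> Prop) -> Prop) (A : X -> Prop) : Prop :=
  forall (I : Type) (U : I -> X -> Prop),
    (forall i, T (U i)) -> (forall x, A x -> exists i, U i x) ->
    exists s : list I, forall x, A x -> exists i, In i s /\ U i x.

(* The four-element Boolean algebra B is atomic with atoms tt and ff, so an
   element of B is determined by the atoms below it, and an atom lies below a
   supremum, infimum, join or implication exactly when the corresponding
   two-valued statement holds.  Testing the equation defining compactness of
   theta against each atom c turns it into: for every directed family of open
   B-sets whose c-cuts cover theta[c], a single member's c-cut covers it.  For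
   the topology tau[c] this is equivalent to compactness of theta[c], since
   finite joins of open B-sets are open and their c-cuts are the finite unions
   of the c-cuts. *)
From Stdlib Require Import List ClassicalEpsilon FunctionalExtensionality.

Lemma pdec_true (P : Prop) : pdec P = true <-> P.
Proof.
  unfold pdec; destruct (excluded_middle_informative P); split; intros;
    auto; try discriminate; contradiction.
Qed.

Lemma ble_tt_bmk t f : ble Btt (bmk t f) = t.
Proof. now destruct t, f. Qed.

Lemma ble_ff_bmk t f : ble Bff (bmk t f) = f.
Proof. now destruct t, f. Qed.

Definition is_atom (c : B4) : Prop := c = Btt \/ c = Bff.

Lemma is_atom_tt : is_atom Btt.
Proof. now left. Qed.

Lemma is_atom_ff : is_atom Bff.
Proof. now right. Qed.

Lemma ble_trans a b d : ble a b = true -> ble b d = true -> ble a d = true.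
Proof. destruct a, b, d; simpl; congruence. Qed.

Lemma ble_atomwise a b :
  (forall c, is_atom c -> ble c a = true -> ble c b = true) -> ble a b = true.
Proof.
  intros H; pose proof (H _ is_atom_tt); pose proof (H _ is_atom_ff).
  destruct a, b; simpl in *; intuition congruence.
Qed.

Lemma b4_eq_atomwise a b :
  (forall c, is_atom c -> ble c a = true <-> ble c b = true) -> a = b.
Proof.
  intros H; pose proof (H _ is_atom_tt); pose proof (H _ is_atom_ff).
  destruct a, b; simpl in *; intuition congruence.
Qed.

Section AtomBelow.

Variable c : B4.
Hypothesis c_atom : is_atom c.

Lemma atom_le_B0 : ble c B0 = false.
Proof. now destruct c_atom as [-> | ->]. Qed.

Lemma atom_le_bjoin a b : ble c (bjoin a b) = true <-> ble c a = true \/ ble c b = true.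
Proof. destruct c_atom as [-> | ->]; destruct a, b; simpl; intuition congruence. Qed.

Lemma atom_le_bimpl a b :
  ble c (bimpl a b) = true <-> (ble c a = true -> ble c b = true).
Proof. destruct c_atom as [-> | ->]; destruct a, b; simpl; intuition congruence. Qed.

Lemma atom_le_bsup S : ble c (bsup S) = true <-> exists b, S b /\ ble c b = true.
Proof.
  unfold bsup; destruct c_atom as [-> | ->];
    rewrite ?ble_tt_bmk, ?ble_ff_bmk; apply pdec_true.
Qed.

Lemma atom_le_binf S : ble c (binf S) = true <-> forall b, S b -> ble c b = true.
Proof.
  unfold binf; destruct c_atom as [-> | ->];
    rewrite ?ble_tt_bmk, ?ble_ff_bmk; apply pdec_true.
Qed.

Lemma cut_pjoin {X} (L : (X -> B4) -> Prop) x :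
  cut (pjoin L) c x <-> exists l, L l /\ cut l c x.
Proof.
  unfold cut, pjoin; rewrite atom_le_bsup; split.
  - intros [b [[l [Hl <-]] Hb]]; eauto.
  - intros [l [Hl Hb]]; eauto.
Qed.

Lemma atom_le_subX {X} (l m : X -> B4) :
  ble c (subX l m) = true <-> forall x, cut l c x -> cut m c x.
Proof.
  unfold subX, cut; rewrite atom_le_binf; split.
  - intros H x; apply atom_le_bimpl; eauto.
  - intros H b [x ->]; apply atom_le_bimpl, H.
Qed.

End AtomBelow.

Definition cut_dcompact {X} (tau : (X -> B4) -> Prop) (theta : X -> B4) (c : B4) : Prop :=
  forall L, (forall l, L l -> tau l) -> pdirected L ->
  (forall x, cut theta c x -> exists l, L l /\ cut l c x) ->
  exists l, L l /\ forall x, cut theta c x -> cut l c x.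

Lemma Bcompact_atomwise {X} (tau : (X -> B4) -> Prop) theta :
  Bcompact tau theta <-> forall c, is_atom c -> cut_dcompact tau theta c.
Proof.
  assert (sup_subX : forall c L, is_atom c ->
    ble c (bsup (fun b => exists l, L l /\ b = subX theta l)) = true <->
    exists l, L l /\ forall x, cut theta c x -> cut l c x).
  { intros c L Hc; rewrite atom_le_bsup by exact Hc; split.
    - intros [b [[l [Hl ->]] Hb]]; exists l; split; auto.
      now apply (atom_le_subX c Hc).
    - intros [l [Hl H]]; exists (subX theta l); split; eauto.
      now apply atom_le_subX. }
  assert (subX_pjoin : forall c L, is_atom c ->
    ble c (subX theta (pjoin L)) = true <->
    forall x, cut theta c x -> exists l, L l /\ cut l c x).
  { intros c L Hc; rewrite atom_le_subX by exact Hc.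
    split; intros H x Hx; now apply (cut_pjoin c Hc), H. }
  split.
  - intros HB c Hc L HL HD Hcov.
    apply sup_subX; auto; rewrite <- (HB L HL HD); now apply subX_pjoin.
  - intros HD L HL Hdir; apply b4_eq_atomwise; intros c Hc.
    rewrite subX_pjoin, sup_subX by exact Hc; split.
    + now apply HD.
    + intros [l [Hl H]] x Hx; eauto.
Qed.

Lemma pdirected_upper_bound {X} (L : (X -> B4) -> Prop) (s : list (X -> B4)) :
  pdirected L -> (forall l, In l s -> L l) ->
  exists n, L n /\ forall l, In l s -> forall x, ble (l x) (n x) = true.
Proof.
  intros [[l0 H0] HD]; induction s as [|a s IH]; intros Hs.
  - exists l0; split; [auto | intros l []].
  - destruct IH as [n [Hn Hb]]; [intros l Hl; apply Hs; now right |].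
    destruct (HD a n) as [n' [Hn' Hb']]; [apply Hs; now left | exact Hn |].
    exists n'; split; auto; intros l [<- | Hl] x.
    + apply Hb'.
    + eapply ble_trans; [apply Hb; auto | apply Hb'].
Qed.

Lemma compact_cut_dcompact {X} (tau : (X -> B4) -> Prop) theta c :
  compact_subset (cut_top tau c) (cut theta c) -> cut_dcompact tau theta c.
Proof.
  intros HC L HL HD Hcov.
  destruct (HC {l | L l} (fun i => cut (proj1_sig i) c)) as [s Hs].
  - intros [l Hl]; exists l; split; auto.
  - intros x Hx; destruct (Hcov x Hx) as [l [Hl H]]; now exists (exist _ l Hl).
  - destruct (pdirected_upper_bound L (map (@proj1_sig _ _) s)) as [n [Hn Hb]]; auto.
    { intros l Hl; apply in_map_iff in Hl; destruct Hl as [[l' Hl'] [<- _]]; auto. }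
    exists n; split; auto; intros x Hx; destruct (Hs x Hx) as [i [Hi H]].
    eapply ble_trans; [exact H | apply Hb, in_map, Hi].
Qed.

Definition join_list {X} (s : list (X -> B4)) : X -> B4 :=
  fold_right (fun l m x => bjoin (l x) (m x)) (fun _ => B0) s.

Lemma cut_join_list {X} c (s : list (X -> B4)) x : is_atom c ->
  cut (join_list s) c x <-> exists l, In l s /\ cut l c x.
Proof.
  intros Hc; unfold cut; induction s as [|a s IH]; simpl.
  - rewrite atom_le_B0 by exact Hc; split; [discriminate | intros [l [[] _]]].
  - rewrite atom_le_bjoin, IH by exact Hc; split.
    + intros [H | [l [Hl H]]]; eauto.
    + intros [l [[<- | Hl] H]]; eauto.
Qed.

Lemma join_list_incl {X} (s t : list (X -> B4)) x :
  incl s t -> ble (join_list s x) (join_list t x) = true.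
Proof.
  intros Hst; apply ble_atomwise; intros c Hc.
  change (cut (join_list s) c x -> cut (join_list t) c x).
  rewrite !(cut_join_list c) by exact Hc.
  intros [l [Hl H]]; eauto.
Qed.

Lemma join_list_open {X} (tau : (X -> B4) -> Prop) (s : list (X -> B4)) :
  is_Btopology tau -> (forall l, In l s -> tau l) -> tau (join_list s).
Proof.
  intros [Hcst [Hjoin _]]; induction s as [|a s IH]; intros Hs; [exact (Hcst B0) |].
  replace (join_list (a :: s)) with (pjoin (fun m => m = a \/ m = join_list s)).
  - apply Hjoin; intros l [-> | ->]; [apply Hs; now left | apply IH; intros; apply Hs; now right].
  - apply functional_extensionality; intro x; apply b4_eq_atomwise; intros c Hc.
    change (cut (pjoin (fun m => m = a \/ m = join_list s)) c x <->
            ble c (bjoin (a x) (join_list s x)) = true).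
    rewrite cut_pjoin, atom_le_bjoin by exact Hc; split.
    + intros [l [[-> | ->] H]]; auto.
    + intros [H | H]; eauto.
Qed.

Lemma cut_dcompact_compact {X} (tau : (X -> B4) -> Prop) theta c :
  is_Btopology tau -> is_atom c ->
  cut_dcompact tau theta c -> compact_subset (cut_top tau c) (cut theta c).
Proof.
  intros Htop Hc HD I U HU Hcov.
  assert (open_of : forall i, {l | tau l /\ U i = cut l c}).
  { intro i; apply constructive_indefinite_description, HU. }
  set (lf := fun i => proj1_sig (open_of i)).
  assert (Hlf : forall i, tau (lf i) /\ U i = cut (lf i) c)
    by (intro i; exact (proj2_sig (open_of i))).
  assert (cut_lf : forall s x, cut (join_list (map lf s)) c x <-> exists i, In i s /\ U i x).
  { intros s x; rewrite cut_join_list by exact Hc; split.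
    - intros [l [Hl H]]; apply in_map_iff in Hl; destruct Hl as [i [<- Hi]].
      exists i; split; auto; now rewrite (proj2 (Hlf i)).
    - intros [i [Hi H]]; exists (lf i); split; [now apply in_map |].
      now rewrite <- (proj2 (Hlf i)). }
  destruct (HD (fun m => exists s, m = join_list (map lf s))) as [m [[s ->] Hm]].
  - intros l [s ->]; apply join_list_open; auto.
    intros l Hl; apply in_map_iff in Hl; destruct Hl as [i [<- _]]; apply Hlf.
  - split; [now exists (join_list (map lf nil)), nil |].
    intros l m [s1 ->] [s2 ->]; exists (join_list (map lf (s1 ++ s2))); split; eauto.
    intro x; rewrite map_app; split; apply join_list_incl;
      [apply incl_appl | apply incl_appr]; apply incl_refl.
  - intros x Hx; destruct (Hcov x Hx) as [i Hi].
    exists (join_list (map lf (i :: nil))); split; eauto.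
    apply cut_lf; exists i; split; [now left | exact Hi].
  - exists s; intros x Hx; now apply cut_lf, Hm.
Qed.

Lemma compact_cut_iff {X} (tau : (X -> B4) -> Prop) theta c :
  is_Btopology tau -> is_atom c ->
  compact_subset (cut_top tau c) (cut theta c) <-> cut_dcompact tau theta c.
Proof.
  intros Htop Hc; split; [apply compact_cut_dcompact | now apply cut_dcompact_compact].
Qed.

Theorem mainTheorem3 (X : Type) (tau : (X -> B4) -> Prop) (theta : X -> B4) :
  is_Btopology tau ->
  (Bcompact tau theta <->
   compact_subset (cut_top tau Btt) (cut theta Btt) /\
   compact_subset (cut_top tau Bff) (cut theta Bff)).
Proof.
  intros Htop.
  rewrite Bcompact_atomwise, !compact_cut_iff by (exact Htop || exact is_atom_tt || exact is_atom_ff).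
  split.
  - intros H; split; [apply H, is_atom_tt | apply H, is_atom_ff].
  - intros [Htt Hff] c [-> | ->]; assumption.
Qed.
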